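(* Let $(V,\le,\preccurlyeq)$ be a mixed lattice vector space equipped with a vector topology $\tau$. The following are equivalent: (a) every neighborhood of zero contains a type 2 mixed-full neighborhood of zero; (b) every neighborhood of zero contains a neighborhood $W$ of zero such that $y\in W$ and $0\le x\preccurlyeq y$ imply $x\in W$; (c) every neighborhood of zero contains a type 1 mixed-full neighborhood of zero; (d) every neighborhood of zero contains a neighborhood $W$ of zero such that $y\in W$ and $0\preccurlyeq x\le y$ imply $x\in W$.
   Context: A mixed lattice vector space $(V,\le,\preccurlyeq)$ is a real vector space $V$ with two partial orderings $\le$ (initial order) and $\preccurlyeq$ (specific order), each making $V$ a partially ordered vector space, with positive cones $V_p=\{x:0\le x\}$, $V_{sp}=\{x:0\preccurlyeq x\}$, such that: (1) for all $x,y$ the elements $x\curlyvee y=\min\{w: w\succcurlyeq x,\ w\ge y\}$ and $x\curlywedge y=\max\{w: w\preccurlyeq x,\ w\le y\}$ exist (min/max with respect to $\le$); (2) $x\preccurlyeq y$ implies $x\le y$; (3) $x\curlyvee y, x\curlywedge y\in V_{sp}$ whenever $x,y\in V_{sp}$. For $A\subseteq V$ let $MF_1(A)=\{y\in V: x\preccurlyeq y\le z \text{ for some } x,z\in A\}$ and $MF_2(A)=\{y\in V: x\le y\preccurlyeq z \text{ for some } x,z\in A\}$. A set $A$ is type 1 mixed-full if $A=MF_1(A)$, and type 2 mixed-full if $A=MF_2(A)$. *)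

From HB Require Import structures.
From mathcomp Require Import all_boot all_order all_algebra.
From mathcomp Require Import all_classical all_reals all_analysis.
Set Implicit Arguments. Unset Strict Implicit. Unset Printing Implicit Defensive.
Import Order.TTheory GRing.Theory Num.Theory.
Local Open Scope ring_scope.
Local Open Scope classical_set_scope.

Section MixedLattice.
Variables (R : realType) (V : lmodType R).

Definition ordered_vector_space (le : V -> V -> Prop) : Prop :=
  [/\ (forall x, le x x),
      (forall x y, le x y -> le y x -> x = y),
      (forall x y z, le x y -> le y z -> le x z),
      (forall x y z, le x y -> le (x + z) (y + z)) &
      (forall (a : R) x y, 0 <= a -> le x y -> le (a *: x) (a *: y))].

Definition is_min_wrt (le : V -> V -> Prop) (S : set V) (w : V) : Prop :=
  S w /\ forall w', S w' -> le w w'.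

Definition is_max_wrt (le : V -> V -> Prop) (S : set V) (w : V) : Prop :=
  S w /\ forall w', S w' -> le w' w.

(* upper mixed envelope  x ⋎ y = min_{<=} {w | x ≼ w, y <= w} *)
Definition mixed_upper (le sle : V -> V -> Prop) (x y : V) : set V :=
  [set w | sle x w /\ le y w].
(* lower mixed envelope  x ⋏ y = max_{<=} {w | w ≼ x, w <= y} *)
Definition mixed_lower (le sle : V -> V -> Prop) (x y : V) : set V :=
  [set w | sle w x /\ le w y].

(* (V, le, sle) is a mixed lattice vector space: le is the initial order,
   sle the specific order. *)
Definition mixed_lattice_vector_space (le sle : V -> V -> Prop) : Prop :=
  [/\ ordered_vector_space le /\ ordered_vector_space sle,
      (forall x y, exists w, is_min_wrt le (mixed_upper le sle x y) w),
      (forall x y, exists w, is_max_wrt le (mixed_lower le sle x y) w),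
      (forall x y, sle x y -> le x y) &
      (forall x y w, sle 0 x -> sle 0 y ->
         (is_min_wrt le (mixed_upper le sle x y) w -> sle 0 w) /\
         (is_max_wrt le (mixed_lower le sle x y) w -> sle 0 w))].

Definition MF1 (le sle : V -> V -> Prop) (A : set V) : set V :=
  [set y | exists x z, A x /\ A z /\ sle x y /\ le y z].
Definition MF2 (le sle : V -> V -> Prop) (A : set V) : set V :=
  [set y | exists x z, A x /\ A z /\ le x y /\ sle y z].

Definition mixed_full1 (le sle : V -> V -> Prop) (A : set V) : Prop :=
  A = MF1 le sle A.
Definition mixed_full2 (le sle : V -> V -> Prop) (A : set V) : Prop :=
  A = MF2 le sle A.

End MixedLattice.

From HB Require Import structures.
From mathcomp Require Import all_boot all_order all_algebra.
From mathcomp Require Import all_classical all_reals all_analysis.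
Set Implicit Arguments. Unset Strict Implicit. Unset Printing Implicit Defensive.
Import Order.TTheory GRing.Theory Num.Theory.
Local Open Scope ring_scope.
Local Open Scope classical_set_scope.

(* The
   symmetric arguments, obtained by exchanging the two orders, give (c) <-> (d)
   and (d) -> (b). *)

Lemma nbhs0_split_add (M : topologicalZmodType) (U : set M) :
  nbhs 0 U -> exists2 W : set M, nbhs 0 W & forall a b, W a -> W b -> U (a + b).
Proof.
move=> U0; have /= := @add_continuous M (0, 0) U; rewrite addr0 => /(_ U0).
case=> -[A B] /= [A0 B0] AB_U; exists (A `&` B); first exact: filterI.
by move=> a b [Aa _] [_ Bb]; exact: (AB_U (a, b)).
Qed.

Lemma nbhs0_split_sub (M : topologicalZmodType) (U : set M) :
  nbhs 0 U -> exists2 W : set M, nbhs 0 W & forall a b, W a -> W b -> U (a - b).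
Proof.
move=> U0; have /= := @sub_continuous M (0, 0) U; rewrite subr0 => /(_ U0).
case=> -[A B] /= [A0 B0] AB_U; exists (A `&` B); first exact: filterI.
by move=> a b [Aa _] [_ Bb]; exact: (AB_U (a, b)).
Qed.

Definition add_invariant_preorder (V : zmodType) (le : V -> V -> Prop) : Prop :=
  [/\ forall x, le x x,
      forall x y z, le x y -> le y z -> le x z &
      forall x y z, le x y -> le (x + z) (y + z)].

Lemma ordered_vector_space_preorder (R : realType) (V : lmodType R)
    (le : V -> V -> Prop) :
  ordered_vector_space le -> add_invariant_preorder le.
Proof. by case. Qed.

Section AddInvariantPreorder.
Variables (V : zmodType) (le : V -> V -> Prop).
Hypothesis le_preorder : add_invariant_preorder le.

Lemma le_subr x y z : le y z -> le (y - x) (z - x).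
Proof. by case: le_preorder => _ _; apply. Qed.

Lemma le_subr_ge0 x y : le x y -> le 0 (y - x).
Proof. by move/(le_subr x); rewrite subrr. Qed.

Lemma le_subl_ge0 x y : le 0 x -> le (y - x) y.
Proof.
case: le_preorder => _ _ add_le /(add_le _ _ (y - x)).
by rewrite add0r (addrC x) subrK.
Qed.

End AddInvariantPreorder.

Definition has_nbhs0_basis (M : topologicalType) (z : M) (P : set M -> Prop) :=
  forall U : set M, nbhs z U -> exists W : set M, [/\ nbhs z W, W `<=` U & P W].

Definition mixed_solid (V : zmodType) (le1 le2 : V -> V -> Prop) (W : set V) :=
  forall x y, W y -> le1 0 x -> le2 x y -> W x.

Section MixedFullNeighbourhoods.
Variables (R : realType) (V : topologicalLmodType R) (le1 le2 : V -> V -> Prop).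
Hypotheses (le1_preorder : add_invariant_preorder le1)
           (le2_preorder : add_invariant_preorder le2).

Lemma subset_MF2 (W : set V) : W `<=` MF2 le1 le2 W.
Proof.
case: le1_preorder => r1 _ _; case: le2_preorder => r2 _ _.
by move=> x Wx; exists x, x.
Qed.

Lemma mixed_full2_MF2 (W : set V) : mixed_full2 le1 le2 (MF2 le1 le2 W).
Proof.
apply/seteqP; split; first exact: subset_MF2.
case: le1_preorder => _ t1 _; case: le2_preorder => _ t2 _.
move=> y [x [z [[a [_ [Wa [_ [ax _]]]]] [[_ [b [_ [Wb [_ zb]]]]] [xy yz]]]]].
by exists a, b; do 3 split => //; [exact: t1 ax xy | exact: t2 yz zb].
Qed.

Lemma mixed_full2_solid (W : set V) :
  W 0 -> mixed_full2 le1 le2 W -> mixed_solid le1 le2 W.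
Proof. by move=> W0 W_full x y Wy x_ge0 xy; rewrite W_full; exists 0, y. Qed.

Lemma MF2_decomposition (W W' : set V) :
  W 0 -> mixed_solid le1 le2 W' -> (forall a b, W a -> W b -> W' (a - b)) ->
  forall y, MF2 le1 le2 W y -> exists2 x, W' x & W' (y - x).
Proof.
move=> W0 W'_solid W_sub y [x [z [Wx [Wz [xy yz]]]]].
exists x; first by have := W_sub x 0 Wx W0; rewrite subr0.
apply: (W'_solid _ (z - x)); first exact: W_sub.
  exact: le_subr_ge0.
exact: le_subr.
Qed.

Lemma nbhs0_basis_mixed_full2_solid :
  has_nbhs0_basis 0 (mixed_full2 le1 le2) <-> has_nbhs0_basis 0 (mixed_solid le1 le2).
Proof.
split=> [full2_basis U U0 | solid_basis U U0].
  have [W [W0 WU W_full2]] := full2_basis U U0.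
  by exists W; split=> //; apply: mixed_full2_solid => //; exact: nbhs_singleton.
have [W3 W3_0 W3_add] := nbhs0_split_add U0.
have [W2 [W2_0 W23 W2_solid]] := solid_basis W3 W3_0.
have [W1 W1_0 W1_sub] := nbhs0_split_sub W2_0.
exists (MF2 le1 le2 W1); split; last exact: mixed_full2_MF2.
  exact: filterS (@subset_MF2 W1) W1_0.
move=> y /(MF2_decomposition (nbhs_singleton W1_0) W2_solid W1_sub) [x W2x W2yx].
by rewrite -(subrK x y) addrC; apply: W3_add; apply: W23.
Qed.

Lemma nbhs0_basis_mixed_solid_swap :
  has_nbhs0_basis 0 (mixed_solid le1 le2) -> has_nbhs0_basis 0 (mixed_solid le2 le1).
Proof.
move=> solid_basis U U0.
have [U1 U1_0 U1_sub] := nbhs0_split_sub U0.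
have [W [W0 WU1 W_solid]] := solid_basis U1 U1_0.
pose hull := [set x | exists2 y, W y & le2 0 x /\ le1 x y].
exists (W `|` hull); split.
- by apply: filterS W0 => x Wx; left.
- have hull_sub x y : W y -> le2 0 x -> le1 x y -> W (y - x).
    move=> Wy x_ge0 xy; apply: (W_solid _ y Wy); first exact: le_subr_ge0.
    exact: le_subl_ge0.
  move=> x [Wx | [y Wy [x_ge0 xy]]].
    by have := U1_sub x 0 (WU1 x Wx) (WU1 0 (nbhs_singleton W0)); rewrite subr0.
  have -> : x = y - (y - x) by rewrite opprB addrC subrK.
  exact: U1_sub (WU1 _ Wy) (WU1 _ (hull_sub x y Wy x_ge0 xy)).
- case: le1_preorder => _ t1 _.
  move=> x y [Wy | [y' Wy' [_ yy']]] x_ge0 xy; right.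
    by exists y.
  by exists y' => //; split => //; exact: t1 xy yy'.
Qed.

End MixedFullNeighbourhoods.

Theorem proposition3p6 (R : realType) (V : topologicalLmodType R)
  (le sle : V -> V -> Prop) :
  mixed_lattice_vector_space le sle ->
  let a := forall U : set V, nbhs (0 : V) U ->
             exists W : set V, [/\ nbhs (0 : V) W, W `<=` U & mixed_full2 le sle W] in
  let b := forall U : set V, nbhs (0 : V) U ->
             exists W : set V, [/\ nbhs (0 : V) W, W `<=` U &
               forall x y, W y -> le 0 x -> sle x y -> W x] in
  let c := forall U : set V, nbhs (0 : V) U ->
             exists W : set V, [/\ nbhs (0 : V) W, W `<=` U & mixed_full1 le sle W] in
  let d := forall U : set V, nbhs (0 : V) U ->
             exists W : set V, [/\ nbhs (0 : V) W, W `<=` U &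
               forall x y, W y -> sle 0 x -> le x y -> W x] in
  (a <-> b) /\ (a <-> c) /\ (a <-> d).
Proof.
case=> -[/ordered_vector_space_preorder le_pre /ordered_vector_space_preorder sle_pre].
move=> _ _ _ _ a b c d.
have ab : a <-> b := nbhs0_basis_mixed_full2_solid le_pre sle_pre.
(* [mixed_full1 le sle] is [mixed_full2 sle le] by definition. *)
have cd : c <-> d := nbhs0_basis_mixed_full2_solid sle_pre le_pre.
have bd : b -> d := nbhs0_basis_mixed_solid_swap le_pre sle_pre.
have db : d -> b := nbhs0_basis_mixed_solid_swap sle_pre le_pre.
split; first exact: ab.
split; split.
- by move=> /ab /bd /cd.
- by move=> /cd /db /ab.
- by move=> /ab /bd.
- by move=> /db /ab.
Qed.
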